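(* Let $(\Omega,\mathcal F)$ be a measurable space, $X$ a bounded measurable function and $w$ a capacity. Then $\alpha\mapsto Q^w_\alpha(X)$ is left-continuous on $(0,1]$ and $\alpha\mapsto\overline Q^w_\alpha(X)$ is right-continuous on $[0,1)$.
   Context: A capacity is an increasing function $w:\mathcal F\to\mathbb R$ (i.e. $w(A)\le w(B)$ for $A\subseteq B$) with $w(\varnothing)=0$, $w(\Omega)=1$. $Q^w_\alpha(X)=\inf\{x\in\mathbb R: w(X\ge x)\le1-\alpha\}$ for $\alpha\in(0,1]$, and $\overline Q^w_\alpha(X)=\inf\{x\in\mathbb R: w(X\ge x)<1-\alpha\}$ for $\alpha\in[0,1)$. *)

From HB Require Import structures.
From mathcomp Require Import all_boot all_order all_algebra.
From mathcomp Require Import all_classical all_reals all_analysis.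
Set Implicit Arguments. Unset Strict Implicit. Unset Printing Implicit Defensive.
Import Order.TTheory GRing.Theory Num.Theory numFieldNormedType.Exports.
Local Open Scope classical_set_scope.
Local Open Scope ring_scope.

(* A capacity on the measurable space (T, measurable): a set function, only
   meaningful on measurable sets, increasing on measurable sets, with
   w(empty) = 0 and w(Omega) = 1. *)
Definition is_capacity (d : measure_display) (T : measurableType d)
  (R : realType) (w : set T -> R) : Prop :=
  [/\ (forall A B : set T, measurable A -> measurable B -> A `<=` B -> w A <= w B),
      w set0 = 0 & w setT = 1].

Definition Qw (T : Type) (R : realType) (w : set T -> R) (X : T -> R) (a : R) : R :=
  inf [set x : R | w [set t | x <= X t] <= 1 - a].

Definition Qbarw (T : Type) (R : realType) (w : set T -> R) (X : T -> R) (a : R) : R :=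
  inf [set x : R | w [set t | x <= X t] < 1 - a].

From HB Require Import structures.
From mathcomp Require Import all_boot all_order all_algebra.
From mathcomp Require Import all_classical all_reals all_analysis.
From mathcomp Require Import lra.
Set Implicit Arguments. Unset Strict Implicit. Unset Printing Implicit Defensive.
Import Order.TTheory GRing.Theory Num.Theory numFieldNormedType.Exports.
Local Open Scope classical_set_scope.
Local Open Scope ring_scope.

(* Both quantiles only depend on the nonincreasing survival function
   g x = w(X >= x), which equals 1 below -M and 0 above M when |X| <= M; so
   every level set {g <= c}, {g < c} with 0 <= c < 1 (resp. 0 < c <= 1) is a
   nonempty ray bounded below.  For left-continuity of Q at a: any x below
   Q_a has g x > 1 - a, hence x stays below Q_b as soon as 1 - b < g x.  For
   right-continuity of Qbar at a: a point y with g y < 1 - a close to Qbar_a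
   still satisfies g y < 1 - b for b slightly above a, so Qbar_b <= y. *)

Definition lower_quantile (R : realType) (g : R -> R) (a : R) : R :=
  inf [set x | g x <= 1 - a].

Definition upper_quantile (R : realType) (g : R -> R) (a : R) : R :=
  inf [set x | g x < 1 - a].

Section SurvivalQuantiles.
Variables (R : realType) (g : R -> R).
Hypothesis g_nonincr : {homo g : x y /~ x <= y}.
Hypothesis g_lt1_lbound : has_lbound [set x | g x < 1].
Hypothesis g_le0 : exists x, g x <= 0.

Lemma lower_quantile_le (a x : R) :
  0 < a -> g x <= 1 - a -> lower_quantile g a <= x.
Proof.
move=> a_gt0 gx; apply: ge_inf => //.
by apply: subset_has_lbound g_lt1_lbound => y /=; lra.
Qed.

Lemma le_lower_quantile (a x : R) :
  a <= 1 -> 1 - a < g x -> x <= lower_quantile g a.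
Proof.
move=> a_le1 gx; have [x0 gx0] := g_le0.
apply: lb_le_inf; first by exists x0 => /=; lra.
move=> y /= gy; rewrite leNgt; apply/negP => /ltW /g_nonincr; lra.
Qed.

Lemma lower_quantile_nondecr (a b : R) :
  0 < a <= b -> b <= 1 -> lower_quantile g a <= lower_quantile g b.
Proof.
move=> /andP[a_gt0 ab] b_le1; have [x0 gx0] := g_le0.
apply: lb_le_inf; first by exists x0 => /=; lra.
by move=> y /= gy; apply: lower_quantile_le => //; lra.
Qed.

Lemma upper_quantile_le (a x : R) :
  0 <= a -> g x < 1 - a -> upper_quantile g a <= x.
Proof.
move=> a_ge0 gx; apply: ge_inf => //.
by apply: subset_has_lbound g_lt1_lbound => y /=; lra.
Qed.

Lemma upper_quantile_nondecr (a b : R) :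
  0 <= a <= b -> b < 1 -> upper_quantile g a <= upper_quantile g b.
Proof.
move=> /andP[a_ge0 ab] b_lt1; have [x0 gx0] := g_le0.
apply: lb_le_inf; first by exists x0 => /=; lra.
by move=> y /= gy; apply: upper_quantile_le => //; lra.
Qed.

Lemma upper_quantile_adherent (a e : R) : a < 1 -> 0 < e ->
  exists2 y, g y < 1 - a & y < upper_quantile g a + e.
Proof.
move=> a_lt1 e_gt0; have [x0 gx0] := g_le0.
by apply: inf_lt; [exists x0 => /=; lra | lra].
Qed.

Lemma lower_quantile_cvg_left (a : R) : 0 < a <= 1 ->
  lower_quantile g b @[b --> a^'-] --> lower_quantile g a.
Proof.
move=> /andP[a_gt0 a_le1]; apply/cvgrPdist_le => e e_gt0.
set x := lower_quantile g a - e.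
have gx : 1 - a < g x.
  by rewrite ltNge; apply/negP => /(lower_quantile_le a_gt0); rewrite /x; lra.
near=> b.
have b_gt0 : 0 < b by near: b; exact: nbhs_left_gt.
have b_le_a : b <= a by near: b; exact: nbhs_left_le.
have gx_b : 1 - g x < b by near: b; apply: nbhs_left_gt; lra.
have upper : lower_quantile g b <= lower_quantile g a.
  by apply: lower_quantile_nondecr => //; rewrite b_gt0.
have lower : lower_quantile g a - e <= lower_quantile g b.
  by apply: le_lower_quantile; lra.
by rewrite ler_norml; apply/andP; split; lra.
Unshelve. all: by end_near.
Qed.

Lemma upper_quantile_cvg_right (a : R) : 0 <= a < 1 ->
  upper_quantile g b @[b --> a^'+] --> upper_quantile g a.
Proof.
move=> /andP[a_ge0 a_lt1]; apply/cvgrPdist_le => e e_gt0.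
have [y gy y_lt] := upper_quantile_adherent a_lt1 e_gt0.
near=> b.
have a_le_b : a <= b by near: b; exact: nbhs_right_ge.
have b_lt1 : b < 1 by near: b; exact: nbhs_right_lt.
have gy_b : b < 1 - g y by near: b; apply: nbhs_right_lt; lra.
have lower : upper_quantile g a <= upper_quantile g b.
  by apply: upper_quantile_nondecr => //; rewrite a_ge0.
have upper : upper_quantile g b <= y by apply: upper_quantile_le => //; lra.
by rewrite ler_norml; apply/andP; split; lra.
Unshelve. all: by end_near.
Qed.

End SurvivalQuantiles.

Lemma measurable_superlevel d (T : measurableType d) (R : realType) (X : T -> R)
    (x : R) :
  measurable_fun setT X -> measurable [set t | x <= X t].
Proof.
move=> mX; rewrite -[X in measurable X]setTI.
have -> : [set t | x <= X t] = X @^-1` `[x, +oo[.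
  by apply/seteqP; split=> t /=; rewrite in_itv /= andbT.
exact: mX.
Qed.

Theorem proposition6 (d : measure_display) (T : measurableType d) (R : realType)
  (w : set T -> R) (X : T -> R) :
  is_capacity w ->
  measurable_fun setT X ->
  (exists M : R, forall t, `|X t| <= M) ->
  (forall a : R, 0 < a <= 1 -> Qw w X b @[b --> a^'-] --> Qw w X a) /\
  (forall a : R, 0 <= a < 1 -> Qbarw w X b @[b --> a^'+] --> Qbarw w X a).
Proof.
move=> [w_mono w0 w1] mX [M X_le_M].
pose g x := w [set t | x <= X t].
have g_nonincr : {homo g : x y /~ x <= y}.
  move=> x y xy; apply: w_mono; try exact: measurable_superlevel.
  by move=> t /=; apply: le_trans.
have g_lt1_lbound : has_lbound [set x | g x < 1].
  exists (- M) => x /=; apply: contraTT; rewrite -ltNge => xM.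
  suff Xx : [set t | x <= X t] = setT by rewrite /g Xx w1 ltxx.
  apply/seteqP; split=> // t _ /=.
  by move: (X_le_M t); rewrite ler_norml => /andP[+ _]; lra.
have g_le0 : exists x, g x <= 0.
  exists (M + 1); suff XM : [set t | M + 1 <= X t] = set0 by rewrite /g XM w0.
  apply/seteqP; split=> // t /=.
  by move: (X_le_M t); rewrite ler_norml => /andP[_ +]; lra.
split=> a a01.
- exact: (lower_quantile_cvg_left g_nonincr g_lt1_lbound g_le0 a01).
- exact: (upper_quantile_cvg_right g_lt1_lbound g_le0 a01).
Qed.
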